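(* Let $\lambda_1,\lambda_2\in\mathbb R$ and let $\xi$ be a pseudo symmetric measure. Then for every $\tau\in\mathcal T$, the eigenvalues of $C_\xi(\tau)$, counted with multiplicity, are $0$ (multiplicity $1$), $(t-1)^{-1}q_\xi^*$ (multiplicity $1$) and $(t-1)^{-1}\ell'V_\xi\ell$ (multiplicity $t-2$), where $q_\xi^*=c_{\xi00}-(c_{\xi01},c_{\xi02})\,Q_\xi^+\,(c_{\xi10},c_{\xi20})'$. Moreover $q_\xi^*\le\ell'V_\xi\ell$.
   Context: Fix integers $k\ge 2$ and $t\ge 2$. Let $\mathcal S$ be the set of all $t^k$ sequences $s=(t_1,\dots,t_k)$ with entries $t_j\in\{1,\dots,t\}$. For $s\in\mathcal S$ let $T_s$ be the $k\times t$ matrix with $(j,i)$ entry equal to $1$ if $t_j=i$ and $0$ otherwise; let $H$ be the $k\times k$ matrix with $(i,j)$ entry $1$ if $i\equiv j+1\pmod k$ and $0$ otherwise; put $L_s=HT_s$, $R_s=H'T_s$ (a prime denotes transpose). Let $\Sigma$ be a fixed $k\times k$ positive definite matrix, $1_k$ the all-ones vector, and $\tilde B=\Sigma^{-1}-\Sigma^{-1}1_k1_k'\Sigma^{-1}/(1_k'\Sigma^{-1}1_k)$. With $G_0=T_s,G_1=L_s,G_2=R_s$ define for $0\le i,j\le 2$ the $t\times t$ matrices $C_{sij}=G_i'\tilde BG_j$. A measure is a vector $\xi=(p_s)_{s\in\mathcal S}$ with $p_s\ge0$, $\sum_sp_s=1$. Put $C_{\xi ij}=\sum_sp_sC_{sij}$,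 $c_{\xi ij}=\operatorname{tr}(C_{\xi ij})$, $V_\xi=(c_{\xi ij})_{0\le i,j\le2}$, $Q_\xi=(c_{\xi ij})_{1\le i,j\le2}$. The measure $\xi$ is pseudo symmetric if each $C_{\xi ij}$ is completely symmetric, i.e. of the form $aI_t+bJ_t$ with $J_t$ the all-ones matrix. $M^+$ denotes the Moore–Penrose inverse. For $u,w\in\mathbb R^3$ (coordinates indexed $0,1,2$) let $C_\xi[u,w]=\sum_{i,j=0}^2u_iw_jC_{\xi ij}$. Let $\mathcal T=\{x\in\mathbb R^t:1_t'x=0,\ x\ne0\}$. For $u\in\mathbb R^3$, vectors $w_1,\dots,w_m\in\mathbb R^3$ ($m\in\{1,2\}$) and $x\in\mathcal T$ define $\mathcal I_\xi(u;w_1,\dots,w_m;x)=C_\xi[u,u]-F'G^+F$, where $F$ is the $m\times t$ matrix whose $a$-th row is $(C_\xi[u,w_a]x)'$ and $G$ is the $m\times m$ matrix with entries $x'C_\xi[w_a,w_b]x$. Let $\ell=(1,\lambda_1,\lambda_2)'$, $e_1=(0,1,0)'$, $e_2=(0,0,1)'$. The information matrix of $\xi$ for the direct treatment effect is $C_\xi(\tau)=\mathcal I_\xi(\ell;e_1,e_2;\tau)$, $\tau\in\mathcal T$. *)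

(* The reals are generalized to an arbitrary real field R
   (the statement is purely algebraic). *)
From HB Require Import structures.
From mathcomp Require Import all_boot all_order all_algebra.
Set Implicit Arguments. Unset Strict Implicit. Unset Printing Implicit Defensive.
Import Order.TTheory GRing.Theory Num.Theory.
Local Open Scope ring_scope.

Section Defs.
Variable R : realFieldType.

Definition penrose m n (A : 'M[R]_(m, n)) (X : 'M[R]_(n, m)) : Prop :=
  [/\ A *m X *m A = A, X *m A *m X = X,
      (A *m X)^T = A *m X & (X *m A)^T = X *m A].

(* Moore--Penrose inverse M^+, via the full-rank factorisation A = Fm *m G
   (G := row_base A row-free, Fm := A *m pinvmx G column-full):
   A^+ = G' (G G')^{-1} (Fm' Fm)^{-1} Fm'.  Over a real field this matrix
   satisfies the Penrose conditions [penrose] above, hence is THE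
   Moore--Penrose inverse. *)
Definition mpinv m n (A : 'M[R]_(m, n)) : 'M[R]_(n, m) :=
  let G := row_base A in
  let Fm := A *m pinvmx G in
  G^T *m invmx (G *m G^T) *m invmx (Fm^T *m Fm) *m Fm^T.

Definition pos_def k (Sigma : 'M[R]_k) : Prop :=
  Sigma^T = Sigma /\ forall x : 'cV[R]_k, x != 0 -> 0 < (x^T *m Sigma *m x) 0 0.

(* Sequences s = (t_1..t_k) with entries in {1..t} are encoded as
   functions 'I_k -> 'I_t (entries shifted to {0..t-1}). *)
Definition seqT k t := {ffun 'I_k -> 'I_t}.

Definition Tmat k t (s : seqT k t) : 'M[R]_(k, t) :=
  \matrix_(j < k, i < t) (s j == i)%:R.

Definition Hmat k : 'M[R]_k :=
  \matrix_(i < k, j < k) (i == (j.+1 %% k)%N :> nat)%:R.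

Definition Lmat k t (s : seqT k t) : 'M[R]_(k, t) := Hmat k *m Tmat s.
Definition Rmat k t (s : seqT k t) : 'M[R]_(k, t) := (Hmat k)^T *m Tmat s.

Definition Gmat k t (s : seqT k t) (i : 'I_3) : 'M[R]_(k, t) :=
  match nat_of_ord i with 0 => Tmat s | 1 => Lmat s | _ => Rmat s end.

Definition ones n : 'cV[R]_n := const_mx 1.

Definition Btilde k (Sigma : 'M[R]_k) : 'M[R]_k :=
  invmx Sigma - (((ones k)^T *m invmx Sigma *m ones k) 0 0)^-1
                 *: (invmx Sigma *m ones k *m (ones k)^T *m invmx Sigma).

Definition Cs k t (Sigma : 'M[R]_k) (s : seqT k t) (i j : 'I_3) : 'M[R]_t :=
  (Gmat s i)^T *m Btilde Sigma *m Gmat s j.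

Definition is_measure k t (p : {ffun seqT k t -> R}) : Prop :=
  (forall s, 0 <= p s) /\ \sum_s p s = 1.

Definition Cxi k t (Sigma : 'M[R]_k) (p : {ffun seqT k t -> R}) (i j : 'I_3)
  : 'M[R]_t := \sum_s p s *: Cs Sigma s i j.

Definition cxi k t Sigma (p : {ffun seqT k t -> R}) (i j : 'I_3) : R :=
  \tr (Cxi Sigma p i j).

Definition Vxi k t Sigma (p : {ffun seqT k t -> R}) : 'M[R]_3 :=
  \matrix_(i, j) cxi Sigma p i j.

Definition Qxi k t Sigma (p : {ffun seqT k t -> R}) : 'M[R]_2 :=
  \matrix_(i < 2, j < 2) cxi Sigma p (lift ord0 i) (lift ord0 j).

Definition completely_symmetric n (M : 'M[R]_n) : Prop :=
  exists a b : R, M = a%:M + b *: const_mx 1.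

Definition pseudo_symmetric k t Sigma (p : {ffun seqT k t -> R}) : Prop :=
  forall i j, completely_symmetric (Cxi Sigma p i j).

Definition Cuw k t Sigma (p : {ffun seqT k t -> R}) (u w : 'cV[R]_3) : 'M[R]_t :=
  \sum_(i < 3) \sum_(j < 3) (u i 0 * w j 0) *: Cxi Sigma p i j.

Definition Ixi k t Sigma (p : {ffun seqT k t -> R}) m (u : 'cV[R]_3)
    (w : 'I_m -> 'cV[R]_3) (x : 'cV[R]_t) : 'M[R]_t :=
  let F : 'M[R]_(m, t) := \matrix_(a < m) (Cuw Sigma p u (w a) *m x)^T in
  let G : 'M[R]_m := \matrix_(a < m, b < m) (x^T *m Cuw Sigma p (w a) (w b) *m x) 0 0 in
  Cuw Sigma p u u - F^T *m mpinv G *m F.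

Definition in_calT t (x : 'cV[R]_t) : Prop := (ones t)^T *m x = 0 /\ x != 0.

Definition ellv (l1 l2 : R) : 'cV[R]_3 := \col_(i < 3) [:: 1; l1; l2]`_i.
Definition e1 : 'cV[R]_3 := \col_(i < 3) [:: 0; 1; 0]`_i.
Definition e2 : 'cV[R]_3 := \col_(i < 3) [:: 0; 0; 1]`_i.
Definition e12 : 'I_2 -> 'cV[R]_3 := fun a => if a == ord0 then e1 else e2.

Definition Ctau k t Sigma (p : {ffun seqT k t -> R}) (l1 l2 : R) (tau : 'cV[R]_t)
  : 'M[R]_t := Ixi Sigma p (ellv l1 l2) e12 tau.

Definition qstar k t Sigma (p : {ffun seqT k t -> R}) : R :=
  cxi Sigma p 0 0 -
  ((\row_(j < 2) cxi Sigma p 0 (lift ord0 j)) *m mpinv (Qxi Sigma p)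
     *m (\col_(i < 2) cxi Sigma p (lift ord0 i) 0)) 0 0.

Definition lVl k t Sigma (p : {ffun seqT k t -> R}) (l1 l2 : R) : R :=
  ((ellv l1 l2)^T *m Vxi Sigma p *m ellv l1 l2) 0 0.

End Defs.

(** The design matrices [T_s], [L_s], [R_s] all have unit row sums while
    [Btilde] annihilates [1_k], so each [C_xi,ij] is a completely symmetric
    matrix with zero row sums, i.e. [c_xi,ij / (t-1)] times the centering
    matrix [P].  For [tau] orthogonal to [1_t] the information matrix thus
    collapses to [(lVl / (t-1)) P - beta tau tau'] with
    [beta tau'tau = (lVl - qstar) / (t-1)], a rank-two update of a scalar
    matrix whose characteristic polynomial follows from Sylvester's
    determinant identity.  The gap [lVl - qstar] is the Schur-complement
    form [g' Q^+ g] with [g = (c_10, c_20)' + Q lambda]; it is nonnegative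
    because [V] is positive semidefinite, hence so are [Q] and [Q^+], and
    [(c_10, c_20)'] lies in the range of [Q]. *)
From HB Require Import structures.
From mathcomp Require Import all_boot all_order all_algebra.
From mathcomp Require Import ring.
Set Implicit Arguments. Unset Strict Implicit. Unset Printing Implicit Defensive.
Import Order.TTheory GRing.Theory Num.Theory.
Local Open Scope ring_scope.

Section RealMatrices.
Variable R : realFieldType.

Lemma trmx11 (a : 'M[R]_1) : a^T = a.
Proof. by rewrite [a]mx11_scalar tr_scalar_mx. Qed.

Lemma cV_norm2E n (x : 'cV[R]_n) : (x^T *m x) 0 0 = \sum_i x i 0 ^+ 2.
Proof. by rewrite mxE; apply: eq_bigr => i _; rewrite mxE expr2. Qed.

Lemma cV_norm2_ge0 n (x : 'cV[R]_n) : 0 <= (x^T *m x) 0 0.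
Proof. by rewrite cV_norm2E sumr_ge0 // => i _; rewrite sqr_ge0. Qed.

Lemma cV_norm2_eq0 n (x : 'cV[R]_n) : ((x^T *m x) 0 0 == 0) = (x == 0).
Proof.
apply/eqP/eqP => [|->]; last by rewrite mulmx0 mxE.
rewrite cV_norm2E => /psumr_eq0P x0; apply/colP => i; rewrite mxE.
by apply/eqP; rewrite -sqrf_eq0; apply/eqP; apply: x0 => // j _; rewrite sqr_ge0.
Qed.

Lemma row_kernel0_unitmx n (A : 'M[R]_n) :
  (forall u : 'rV_n, u *m A = 0 -> u = 0) -> A \in unitmx.
Proof.
move=> kerA0; rewrite -row_free_unit -kermx_eq0; apply/eqP/row_matrixP => i.
by rewrite row0; apply: kerA0; rewrite -row_mul mulmx_ker row0.
Qed.

Lemma gram_unitmx m n (B : 'M[R]_(m, n)) :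
  (forall u : 'rV_m, u *m B = 0 -> u = 0) -> B *m B^T \in unitmx.
Proof.
move=> kerB0; apply: row_kernel0_unitmx => u uBB0; apply: kerB0.
apply: trmx_inj; rewrite trmx0; apply/eqP; rewrite -cV_norm2_eq0 trmxK.
by rewrite trmx_mul mulmxA -(mulmxA u) uBB0 mul0mx mxE.
Qed.

(** * The Moore--Penrose inverse *)

Lemma penrose_full_rank_factor m n r (A : 'M[R]_(m, n)) (G : 'M_(r, n))
    (Fm : 'M_(m, r)) :
  Fm *m G = A -> G *m G^T \in unitmx -> Fm^T *m Fm \in unitmx ->
  penrose A (G^T *m invmx (G *m G^T) *m invmx (Fm^T *m Fm) *m Fm^T).
Proof.
move=> <- GGu FFu.
set X := G^T *m _ *m _ *m Fm^T.
have AXE : Fm *m G *m X = Fm *m invmx (Fm^T *m Fm) *m Fm^T.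
  by rewrite !mulmxA -(mulmxA Fm G) -(mulmxA Fm (G *m G^T)) mulmxV // mulmx1.
have XAE : X *m (Fm *m G) = G^T *m invmx (G *m G^T) *m G.
  rewrite !mulmxA -(mulmxA _ Fm^T Fm) -(mulmxA (G^T *m _) _ (Fm^T *m Fm)).
  by rewrite mulVmx // mulmx1.
split.
- rewrite AXE !mulmxA -(mulmxA (Fm *m _) Fm^T Fm) -(mulmxA Fm _ (Fm^T *m Fm)).
  by rewrite mulVmx // mulmx1.
- rewrite XAE !mulmxA -(mulmxA (G^T *m _) G G^T) -(mulmxA G^T _ (G *m G^T)).
  by rewrite mulVmx // mulmx1.
- by rewrite AXE !trmx_mul trmxK trmx_inv trmx_mul trmxK !mulmxA.
- by rewrite XAE !trmx_mul trmxK trmx_inv trmx_mul trmxK !mulmxA.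
Qed.

Lemma mpinv_penrose m n (A : 'M[R]_(m, n)) : penrose A (mpinv A).
Proof.
rewrite /mpinv; set G := row_base A; set Fm := A *m pinvmx G.
have FGE : Fm *m G = A by rewrite /Fm mulmxKpV // /G eq_row_base.
have GGu : G *m G^T \in unitmx.
  apply: gram_unitmx => u uG0; apply: (row_free_inj (row_base_free A)).
  by rewrite uG0 mul0mx.
have FTfree : row_free Fm^T.
  rewrite /row_free mxrank_tr eqn_leq rank_leq_col /=.
  by apply: leq_trans (mxrankM_maxl Fm G); rewrite FGE.
have FFu : Fm^T *m Fm \in unitmx.
  rewrite -[X in _ *m X]trmxK; apply: gram_unitmx => u uF0.
  by apply: (row_free_inj FTfree); rewrite uF0 mul0mx.
exact: penrose_full_rank_factor FGE GGu FFu.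
Qed.

Lemma penrose_uniq m n (A : 'M[R]_(m, n)) X Y :
  penrose A X -> penrose A Y -> X = Y.
Proof.
case=> AXA XAX AXs XAs [AYA YAY AYs YAs].
have XE : X = X *m A *m Y.
  transitivity (X *m (A *m X)^T); first by rewrite AXs mulmxA XAX.
  transitivity (X *m X^T *m (A *m Y *m A)^T).
    by rewrite AYA trmx_mul; apply: mulmxA.
  transitivity (X *m (A *m X)^T *m (A *m Y)^T); first by rewrite !trmx_mul !mulmxA.
  by rewrite AXs AYs !mulmxA XAX.
have YE : Y = X *m A *m Y.
  transitivity ((Y *m A)^T *m Y); first by rewrite YAs YAY.
  transitivity ((A *m X *m A)^T *m Y^T *m Y); first by rewrite AXA trmx_mul.
  transitivity ((X *m A)^T *m (Y *m A)^T *m Y); first by rewrite !trmx_mul !mulmxA.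
  by rewrite XAs YAs -[LHS]mulmxA YAY.
by rewrite XE -YE.
Qed.

Lemma penroseZ m n (A : 'M[R]_(m, n)) X c : c != 0 ->
  penrose A X -> penrose (c *: A) (c^-1 *: X).
Proof.
move=> c0 [AXA XAX AXs XAs].
have AXE : (c *: A) *m (c^-1 *: X) = A *m X.
  by rewrite -scalemxAl -scalemxAr scalerA mulfV // scale1r.
have XAE : (c^-1 *: X) *m (c *: A) = X *m A.
  by rewrite -scalemxAl -scalemxAr scalerA mulVf // scale1r.
by split; rewrite ?AXE ?XAE // -scalemxAr ?AXA ?XAX.
Qed.

Lemma mpinvZ m n (A : 'M[R]_(m, n)) c : c != 0 ->
  mpinv (c *: A) = c^-1 *: mpinv A.
Proof.
move=> c0; apply: (penrose_uniq (mpinv_penrose _)).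
exact: penroseZ (mpinv_penrose _).
Qed.

Lemma penrose_tr m n (A : 'M[R]_(m, n)) X : penrose A X -> penrose A^T X^T.
Proof.
case=> AXA XAX AXs XAs; split.
- by rewrite -[in RHS]AXA !trmx_mul mulmxA.
- by rewrite -[in RHS]XAX !trmx_mul mulmxA.
- by rewrite -trmx_mul !XAs.
- by rewrite -trmx_mul !AXs.
Qed.

Lemma mpinv_sym n (A : 'M[R]_n) : A^T = A -> (mpinv A)^T = mpinv A.
Proof.
move=> As; apply: (penrose_uniq _ (mpinv_penrose _)).
by rewrite -{1}As; apply: penrose_tr (mpinv_penrose _).
Qed.

(** * Positive semidefinite and positive definite matrices *)

Definition psd n (A : 'M[R]_n) : Prop :=
  forall y : 'cV[R]_n, 0 <= (y^T *m A *m y) 0 0.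

Lemma psd_trace_congr m n (A : 'M[R]_(m, n)) (B : 'M[R]_m) :
  psd B -> 0 <= \tr (A^T *m B *m A).
Proof.
move=> Bpsd; rewrite /mxtrace sumr_ge0 // => i _.
have -> : (A^T *m B *m A) i i = ((col i A)^T *m B *m col i A) 0 0.
  rewrite !mxE; apply: eq_bigr => j _; rewrite !mxE; congr (_ * _).
  by apply: eq_bigr => l _; rewrite !mxE.
exact: Bpsd.
Qed.

Lemma psd_mpinv n (A : 'M[R]_n) : A^T = A -> psd A -> psd (mpinv A).
Proof.
move=> As Apsd y; case: (mpinv_penrose A) => _ XAX _ _.
move: (mpinv_sym As) XAX; move: (mpinv A) => M Ms MAM.
have -> : y^T *m M *m y = (M *m y)^T *m A *m (M *m y).
  rewrite trmx_mul Ms -!mulmxA (mulmxA A) (mulmxA M (A *m M)).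
  by rewrite (mulmxA M A M) MAM.
exact: Apsd.
Qed.

(** The hypothesis of [mpinv_border_range] states that the bordered matrix
    [[c, v'], [v, Q]] is positive semidefinite. *)

Lemma mpinv_border_range n (c : R) (v : 'cV[R]_n) (Q : 'M[R]_n) : Q^T = Q ->
  (forall a (b : 'cV_n),
     0 <= a ^+ 2 * c + 2 * a * (b^T *m v) 0 0 + (b^T *m Q *m b) 0 0) ->
  Q *m mpinv Q *m v = v.
Proof.
move=> Qs border; move: (mpinv_penrose Q); move: (mpinv Q) => M [QMQ _ QMs _].
have c_ge0 : 0 <= c.
  by have := border 1 0; rewrite trmx0 !mul0mx mxE expr1n mul1r mulr0 !addr0.
have QQM : Q *m (Q *m M) = Q.
  by rewrite -[LHS]trmxK trmx_mul QMs Qs QMQ Qs.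
set d := v - Q *m M *m v.
have Qd0 : Q *m d = 0 by rewrite /d mulmxBr (mulmxA Q (Q *m M)) QQM subrr.
have dQ0 : d^T *m Q = 0 by rewrite -Qs -trmx_mul Qd0 trmx0.
have ddE : d^T *m d = d^T *m v.
  by rewrite {2}/d mulmxBr -!mulmxA (mulmxA d^T Q) dQ0 mul0mx subr0.
suff /eqP : (d^T *m d) 0 0 = 0.
  by rewrite cV_norm2_eq0 /d subr_eq0 => /eqP <-.
set nd := (d^T *m d) 0 0; apply/eqP; apply: contraT => nd_neq0.
have nd_gt0 : 0 < nd by rewrite lt_def nd_neq0 cV_norm2_ge0.
have c1_gt0 : 0 < c + 1 by rewrite ltr_wpDl.
have := border (nd / (c + 1)) (- d).
rewrite raddfN /= !mulNmx dQ0 mul0mx oppr0 [(0 : 'M_1) 0 0]mxE addr0 -ddE.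
rewrite mxE -/nd.
have -> : (nd / (c + 1)) ^+ 2 * c + 2 * (nd / (c + 1)) * - nd
        = - (nd ^+ 2 * (c + 2) / (c + 1) ^+ 2).
  by field; rewrite gt_eqF.
rewrite oppr_ge0 leNgt divr_gt0 ?exprn_gt0 // mulr_gt0 ?exprn_gt0 //.
by rewrite ltr_wpDl.
Qed.

Lemma mpinv_border_quad n (Q : 'M[R]_n) (v l : 'cV[R]_n) : Q^T = Q ->
  Q *m mpinv Q *m v = v ->
  ((v + Q *m l)^T *m mpinv Q *m (v + Q *m l)) 0 0
    = (v^T *m mpinv Q *m v) 0 0 + 2 * (l^T *m v) 0 0 + (l^T *m Q *m l) 0 0.
Proof.
move=> Qs; have Ms := mpinv_sym Qs; move: (mpinv_penrose Q) Ms.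
move: (mpinv Q) => M [QMQ _ _ _] Ms vQ.
have lQMv : l^T *m Q *m M *m v = l^T *m v.
  by rewrite -(mulmxA (l^T *m Q)) -(mulmxA l^T) (mulmxA Q) vQ.
have vMQl : v^T *m M *m Q *m l = l^T *m v.
  by rewrite -lQMv -[LHS]trmx11 !trmx_mul trmxK Ms Qs !mulmxA.
have lQMQl : l^T *m Q *m M *m Q *m l = l^T *m Q *m l.
  by rewrite -(mulmxA (l^T *m Q) M Q) -(mulmxA l^T Q) (mulmxA Q M Q) QMQ.
rewrite [(v + _)^T]raddfD /= trmx_mul Qs !(mulmxDl, mulmxDr) !mulmxA.
by rewrite lQMv vMQl lQMQl !mxE; ring.
Qed.

Lemma pos_def_psd n (A : 'M[R]_n) : pos_def A -> psd A.
Proof.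
case=> _ Apos y; have [->|y0] := eqVneq y 0; first by rewrite mulmx0 mxE.
exact/ltW/Apos.
Qed.

Lemma pos_def_unitmx n (A : 'M[R]_n) : pos_def A -> A \in unitmx.
Proof.
case=> _ Apos; apply: row_kernel0_unitmx => u uA0; apply: trmx_inj.
rewrite trmx0; apply/eqP; apply: contraT => /Apos.
by rewrite trmxK uA0 mul0mx mxE ltxx.
Qed.

Lemma pos_def_invmx n (A : 'M[R]_n) : pos_def A -> pos_def (invmx A).
Proof.
move=> Apd; have Au := pos_def_unitmx Apd; case: Apd => As Apos.
split=> [|y y0]; first by rewrite trmx_inv As.
set z := invmx A *m y.
have yE : y = A *m z by rewrite /z mulmxA mulmxV // mul1mx.
have z0 : z != 0 by apply: contraNneq y0 => z0; rewrite yE z0 mulmx0.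
have -> : y^T *m invmx A *m y = z^T *m A *m z.
  rewrite {1}yE trmx_mul As -(mulmxA _ A (invmx A)) mulmxV // mulmx1.
  by rewrite -mulmxA -yE.
exact: Apos.
Qed.

Lemma psd_deflation n (S : 'M[R]_n) (o : 'cV[R]_n) (s : R) :
  S^T = S -> psd S -> o^T *m S *m o = s%:M -> s != 0 ->
  psd (S - s^-1 *: (S *m o *m o^T *m S)).
Proof.
move=> Ss Spsd sE s0; set u := S *m o.
have uT : u^T = o^T *m S by rewrite /u trmx_mul Ss.
(* The deflated matrix is the congruence [P' S P] by the projection
   [P := 1 - s^-1 o o' S] along [o]. *)
set P : 'M_n := 1%:M - s^-1 *: (o *m u^T).
suff <- : P^T *m S *m P = S - s^-1 *: (S *m o *m o^T *m S).
  by move=> y; have := Spsd (P *m y); rewrite trmx_mul !mulmxA.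
have -> : S *m o *m o^T *m S = u *m u^T by rewrite uT /u !mulmxA.
rewrite /P [(1%:M - _)^T]raddfB /= trmx1 [(_ *: _)^T]linearZ /= trmx_mul trmxK.
rewrite uT !(mulmxBl, mulmxBr) mul1mx mulmx1 -!scalemxAl -!scalemxAr -uT.
have -> : u *m o^T *m S = u *m u^T by rewrite uT mulmxA.
have -> : S *m (o *m u^T) = u *m u^T by rewrite mulmxA.
have -> : u *m u^T *m (o *m u^T) = s *: (u *m u^T).
  by rewrite mulmxA -(mulmxA u) uT sE mul_mx_scalar scalemxAl.
rewrite mulmx1 scalerA; set A := u *m u^T.
by apply/matrixP => i j; rewrite !mxE; field.
Qed.

(** * Completely symmetric matrices *)

Definition centering t : 'M[R]_t := 1%:M - t%:R^-1 *: const_mx 1.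

Lemma centering_ones_orth t (x : 'cV[R]_t) :
  (ones R t)^T *m x = 0 -> centering t *m x = x.
Proof.
move=> x_orth; rewrite /centering; have -> : const_mx 1 = ones R t *m (ones R t)^T.
  by apply/matrixP => i j; rewrite !mxE big_ord1 !mxE mulr1.
by rewrite mulmxBl mul1mx -scalemxAl -mulmxA x_orth mulmx0 scaler0 subr0.
Qed.

Lemma completely_symmetric_centering t (M : 'M[R]_t) : (1 < t)%N ->
  completely_symmetric M -> M *m ones R t = 0 ->
  M = (\tr M / t.-1%:R) *: centering t.
Proof.
move=> t_gt1 [a [b ->]] M1; have t_gt0 := ltnW t_gt1.
have tE : t%:R = t.-1%:R + 1 :> R by rewrite natr1 prednK.
have t_neq0 : t%:R != 0 :> R by rewrite pnatr_eq0 -lt0n.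
have t1_neq0 : t.-1%:R != 0 :> R by rewrite pnatr_eq0 -lt0n -ltnS prednK.
have J1 : const_mx 1 *m ones R t = t%:R *: ones R t.
  apply/colP => i; rewrite !mxE (eq_bigr (fun=> 1)) ?sumr_const ?card_ord ?mulr1 //.
  by move=> j _; rewrite !mxE mulr1.
have /eqP : a + b * t%:R = 0.
  move: M1; rewrite mulmxDl mul_scalar_mx -scalemxAl J1 scalerA -scalerDl.
  by move/colP/(_ (Ordinal t_gt0)); rewrite !mxE mulr1.
rewrite addr_eq0 => /eqP ab; have bE : b = - a / t%:R by rewrite ab opprK mulfK.
rewrite mxtraceD mxtrace_scalar mxtraceZ bE /centering -[a *+ t]mulr_natr.
have -> : \tr (const_mx 1 : 'M[R]_t) = t%:R.
  by rewrite /mxtrace (eq_bigr (fun=> 1)) ?sumr_const ?card_ord // => j _; rewrite mxE.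
(* [field] cannot see [t%:R = t.-1%:R + 1], so both casts are abstracted. *)
move: tE t_neq0 t1_neq0; move: (t%:R) (t.-1%:R) => T T1 -> Tn0 T1n0.
apply/matrixP => i j; rewrite !mxE; case: (i == j); rewrite ?mulr1n ?mulr0n.
all: by field; rewrite Tn0 T1n0.
Qed.

End RealMatrices.

(** * Characteristic polynomial of a rank-two update *)

Lemma sylvester_det (Rc : comPzRingType) n m (c : Rc) (U : 'M_(n, m))
    (W : 'M_(m, n)) :
  c ^+ m * \det (c%:M + U *m W) = c ^+ n * \det (c%:M + W *m U).
Proof.
have E : block_mx 1%:M 0 W c%:M *m block_mx (c%:M + U *m W) U 0 1%:M
       = block_mx c%:M U 0 (c%:M + W *m U) *m block_mx 1%:M 0 W 1%:M.
  rewrite !mulmx_block !mul1mx !mulmx1 !mul0mx !mulmx0 !add0r !addr0.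
  by rewrite mulmxDl mulmxDr mul_mx_scalar mul_scalar_mx !mulmxA [W *m U + _]addrC.
have := congr1 determinant E.
rewrite !det_mulmx det_lblock det_ublock det_lblock det_ublock !det1 !det_scalar.
by rewrite !mul1r !mulr1.
Qed.

Lemma char_poly_rank2_update (R : realFieldType) t (a b s nx : R)
    (x o : 'cV[R]_t) (A : 'M_t) :
  (2 <= t)%N -> o^T *m x = 0 -> o^T *m o = s%:M -> x^T *m x = nx%:M -> s != 0 ->
  A = a%:M - (a / s) *: (o *m o^T) - b *: (x *m x^T) ->
  char_poly A = 'X * ('X - (a - b * nx)%:P) * ('X - a%:P) ^+ (t - 2).
Proof.
move=> t_ge2 ox0 ooE xxE s0 AE.
have xo0 : x^T *m o = 0 by rewrite -[o]trmxK -trmx_mul ox0 trmx0.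
set U := row_mx o x; set W := col_mx ((a / s) *: o^T) (b *: x^T).
have AUW : A = a%:M - U *m W by rewrite AE mul_row_col -!scalemxAr opprD addrA.
have WU : W *m U = block_mx a%:M 0 0 (b * nx)%:M.
  rewrite mul_col_row -!scalemxAl ox0 xo0 ooE xxE !scaler0 !scale_scalar_mx.
  by rewrite mulfVK.
set C := 'X - a%:P.
have charE : char_poly_mx A = C%:M + map_mx polyC U *m map_mx polyC W.
  have -> : (C%:M : 'M_t) = 'X%:M - (a%:P)%:M.
    by apply/matrixP => i j; rewrite !mxE; case: (i == j); rewrite ?mulr1n ?mulr0n ?subr0.
  by rewrite /char_poly_mx AUW map_mxB map_scalar_mx map_mxM /= opprB addrA addrAC.
have := sylvester_det C (map_mx polyC U) (map_mx polyC W).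
rewrite -[in RHS]map_mxM WU map_block_mx !map_scalar_mx !map_mx0 /=.
rewrite [in RHS]scalar_mx_block add_block_mx !addr0 det_ublock.
have addM1 (u v : {poly R}) : (u%:M + v%:M : 'M_1) = (u + v)%:M.
  by apply/matrixP => i j; rewrite !mxE -mulrnDl.
rewrite !addM1 !det_scalar !expr1 -charE => sylv.
have C2_neq0 : C ^+ 2 != 0 by rewrite expf_neq0 // polyXsubC_eq0.
apply: (mulfI C2_neq0); rewrite /char_poly sylv.
by rewrite -{1}(subnKC t_ge2) exprD /C polyCB; ring.
Qed.

(** * The crossover design *)

Section Design.
Variables (R : realFieldType) (k t : nat) (Sigma : 'M[R]_k).
Hypotheses (k_gt0 : (0 < k)%N) (Sigma_pd : pos_def Sigma).

Local Notation o := (ones R k).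
Local Notation S := (invmx Sigma).

Lemma Tmat_ones (s : seqT k t) : Tmat R s *m ones R t = o.
Proof.
apply/colP => j; rewrite !mxE (bigD1 (s j)) //= !mxE eqxx mul1r big1 ?addr0 //.
by move=> i ne; rewrite !mxE (eq_sym (s j)) (negbTE ne) mul0r.
Qed.

Lemma HmatE i j : Hmat R k i j = (i == ordS j)%:R.
Proof. by rewrite mxE. Qed.

Lemma Hmat_ones : Hmat R k *m o = o.
Proof.
apply/colP => i; rewrite !mxE (bigD1 (ord_pred i)) //= HmatE ord_predK eqxx.
rewrite mxE mul1r big1 ?addr0 // => j ne; rewrite HmatE.
case: eqP => [iE|_]; last by rewrite mul0r.
by move: ne; rewrite iE ordSK eqxx.
Qed.

Lemma trHmat_ones : (Hmat R k)^T *m o = o.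
Proof.
apply/colP => j; rewrite !mxE (bigD1 (ordS j)) //= mxE HmatE eqxx.
by rewrite mxE mul1r big1 ?addr0 // => i ne; rewrite mxE HmatE (negbTE ne) mul0r.
Qed.

Lemma Gmat_ones (s : seqT k t) i : Gmat R s i *m ones R t = o.
Proof.
case: i => [[|[|[|n]]] i_lt3] //; rewrite /Gmat /=.
- exact: Tmat_ones.
- by rewrite /Lmat -mulmxA Tmat_ones Hmat_ones.
- by rewrite /Rmat -mulmxA Tmat_ones trHmat_ones.
Qed.

Lemma ones_invmx_ones_gt0 : 0 < (o^T *m S *m o) 0 0.
Proof.
case: (pos_def_invmx Sigma_pd) => _; apply; apply/eqP.
by move=> /colP /(_ (Ordinal k_gt0)); rewrite !mxE => /eqP; rewrite oner_eq0.
Qed.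

Lemma Btilde_ones : Btilde Sigma *m o = 0.
Proof.
rewrite /Btilde mulmxBl -scalemxAl.
have -> : S *m o *m o^T *m S *m o = (o^T *m S *m o) 0 0 *: (S *m o).
  by rewrite -mul_mx_scalar -mx11_scalar !mulmxA.
rewrite scalerA mulVf ?scale1r ?subrr //.
by rewrite gt_eqF // ones_invmx_ones_gt0.
Qed.

Lemma Btilde_sym : (Btilde Sigma)^T = Btilde Sigma.
Proof.
have [Ss _] := pos_def_invmx Sigma_pd.
by rewrite /Btilde raddfB /= linearZ /= !trmx_mul !trmxK Ss !mulmxA.
Qed.

Lemma Btilde_psd : psd (Btilde Sigma).
Proof.
have [Ss _] := pos_def_invmx Sigma_pd.
apply: psd_deflation (mx11_scalar _) _ => //.
  exact/pos_def_psd/pos_def_invmx.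
by rewrite gt_eqF // ones_invmx_ones_gt0.
Qed.

Variable p : {ffun seqT k t -> R}.
Hypotheses (t_gt1 : (1 < t)%N) (p_measure : is_measure p)
  (p_pseudo_sym : pseudo_symmetric Sigma p).

Local Notation c := (cxi Sigma p).
Local Notation V := (Vxi Sigma p).
Local Notation Q := (Qxi Sigma p).
Local Notation P := (centering R t).

Let t1_neq0 : t.-1%:R != 0 :> R.
Proof. by rewrite pnatr_eq0 -lt0n -ltnS prednK // ltnW. Qed.

Lemma Cxi_ones i j : Cxi Sigma p i j *m ones R t = 0.
Proof.
rewrite /Cxi mulmx_suml big1 // => s _.
by rewrite -scalemxAl /Cs -!mulmxA Gmat_ones Btilde_ones mulmx0 scaler0.
Qed.

Lemma Cxi_centering i j : Cxi Sigma p i j = (c i j / t.-1%:R) *: P.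
Proof. exact: completely_symmetric_centering (p_pseudo_sym i j) (Cxi_ones i j). Qed.

Lemma cxi_sym i j : c i j = c j i.
Proof.
rewrite /cxi -mxtrace_tr /Cxi raddf_sum /=; congr (\tr _).
by apply: eq_bigr => s _; rewrite linearZ /= /Cs !trmx_mul trmxK Btilde_sym mulmxA.
Qed.

Lemma Vxi_bilinE (u w : 'cV[R]_3) :
  (u^T *m V *m w) 0 0 = \sum_i \sum_j (u i 0 * w j 0) * c i j.
Proof.
rewrite mxE exchange_big /=; apply: eq_bigr => j _; rewrite mxE mulr_suml.
by apply: eq_bigr => i _; rewrite !mxE; ring.
Qed.

Lemma Cuw_centering u w : Cuw Sigma p u w = ((u^T *m V *m w) 0 0 / t.-1%:R) *: P.
Proof.
rewrite Vxi_bilinE /Cuw mulr_suml scaler_suml; apply: eq_bigr => i _.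
rewrite mulr_suml scaler_suml; apply: eq_bigr => j _.
by rewrite Cxi_centering scalerA mulrA.
Qed.

Lemma Vxi_bilin_trace u w : (u^T *m V *m w) 0 0 = \tr (Cuw Sigma p u w).
Proof.
rewrite Vxi_bilinE /Cuw raddf_sum; apply: eq_bigr => i _.
by rewrite raddf_sum; apply: eq_bigr => j _; rewrite /= mxtraceZ.
Qed.

Lemma Cuw_design_sum (u w : 'cV[R]_3) :
  Cuw Sigma p u w = \sum_s p s *: ((\sum_i u i 0 *: Gmat R s i)^T
                        *m Btilde Sigma *m (\sum_j w j 0 *: Gmat R s j)).
Proof.
have Gsum s : (\sum_i u i 0 *: Gmat R s i)^T *m Btilde Sigma
                *m (\sum_j w j 0 *: Gmat R s j)
            = \sum_i \sum_j (u i 0 * w j 0) *: Cs Sigma s i j.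
  rewrite [(\sum_i _)^T]raddf_sum /= !mulmx_suml; apply: eq_bigr => i _.
  rewrite mulmx_sumr; apply: eq_bigr => j _.
  by rewrite linearZ /= [(_ *: _)^T]linearZ /= -!scalemxAl scalerA mulrC.
symmetry; under eq_bigr => s _ do rewrite Gsum scaler_sumr.
rewrite exchange_big; apply: eq_bigr => i _.
under eq_bigr => s _ do rewrite scaler_sumr.
rewrite exchange_big; apply: eq_bigr => j _.
by rewrite /Cxi scaler_sumr; apply: eq_bigr => s _; rewrite !scalerA mulrC.
Qed.

Lemma Vxi_psd : psd V.
Proof.
move=> u; rewrite Vxi_bilin_trace Cuw_design_sum raddf_sum sumr_ge0 // => s _.
rewrite /= mxtraceZ mulr_ge0 //; last exact: psd_trace_congr Btilde_psd.
by case: p_measure.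
Qed.

(* [cn]/[vn] re-index by plain naturals, so that after expanding the sums
   over ['I_3] the ordinal arguments compute under [/=]. *)
Let cn (i j : nat) : R := c (inord i) (inord j).
Let cE (i j : 'I_3) : c i j = cn i j.
Proof. by rewrite /cn !inord_val. Qed.
Let cn_sym (i j : nat) : (i < 3)%N -> (j < 3)%N -> cn i j = cn j i.
Proof. by move=> *; rewrite /cn cxi_sym. Qed.
Let vn n (b : 'cV[R]_n.+1) (i : nat) : R := b (inord i) 0.
Let vE n (b : 'cV[R]_n.+1) (i : 'I_n.+1) : b i 0 = vn b i.
Proof. by rewrite /vn inord_val. Qed.

Definition border_vec (a : R) (b : 'cV[R]_2) : 'cV[R]_3 :=
  \col_(i < 3) [:: a; b 0 0; b 1 0]`_i.
Definition cxi_border : 'cV[R]_2 := \col_(i < 2) c (lift ord0 i) 0.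
Local Notation v := cxi_border.

Lemma Vxi_border a b : ((border_vec a b)^T *m V *m border_vec a b) 0 0 =
  a ^+ 2 * c 0 0 + 2 * a * (b^T *m v) 0 0 + (b^T *m Q *m b) 0 0.
Proof.
rewrite Vxi_bilinE !mxE !big_ord_recr big_ord0 /= !mxE /=.
rewrite !big_ord_recr !big_ord0 /= !mxE /= !cE !vE /=.
rewrite /bump /= (_ : (1 %% 2)%N = 1%N) // (@cn_sym 1 0) // (@cn_sym 2 0) //.
by rewrite (@cn_sym 2 1) //; ring.
Qed.

Lemma Qxi_sym : Q^T = Q.
Proof. by apply/matrixP => i j; rewrite !mxE cxi_sym. Qed.

Lemma Qxi_psd : psd Q.
Proof.
move=> b; have := Vxi_psd (border_vec 0 b); rewrite Vxi_border.
by rewrite expr0n /= mul0r mulr0 mul0r !add0r.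
Qed.

Lemma cxi_border_range : Q *m mpinv Q *m v = v.
Proof.
apply: (mpinv_border_range (c := c 0 0)) => [|a b]; first exact: Qxi_sym.
by rewrite -Vxi_border; apply: Vxi_psd.
Qed.

Definition lam (l1 l2 : R) : 'cV[R]_2 := \col_(i < 2) [:: l1; l2]`_i.

Lemma ellv_border l1 l2 : ellv l1 l2 = border_vec 1 (lam l1 l2).
Proof. by apply/colP => i; rewrite !mxE; case: i => [[|[|[|]]] ?]. Qed.

Lemma lVl_border l1 l2 : lVl Sigma p l1 l2 =
  c 0 0 + 2 * ((lam l1 l2)^T *m v) 0 0 + ((lam l1 l2)^T *m Q *m lam l1 l2) 0 0.
Proof. by rewrite /lVl ellv_border Vxi_border expr1n mul1r mulr1. Qed.

Lemma qstar_border : qstar Sigma p = c 0 0 - (v^T *m mpinv Q *m v) 0 0.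
Proof.
rewrite /qstar; congr (_ - (_ *m _ *m _) 0 0).
by apply/rowP => j; rewrite !mxE cxi_sym.
Qed.

Lemma lVl_sub_qstar l1 l2 :
  lVl Sigma p l1 l2 - qstar Sigma p
  = ((v + Q *m lam l1 l2)^T *m mpinv Q *m (v + Q *m lam l1 l2)) 0 0.
Proof.
rewrite mpinv_border_quad ?cxi_border_range ?Qxi_sym //.
by rewrite lVl_border qstar_border; ring.
Qed.

Lemma qstar_le_lVl l1 l2 : qstar Sigma p <= lVl Sigma p l1 l2.
Proof. by rewrite -subr_ge0 lVl_sub_qstar; apply: psd_mpinv Qxi_sym Qxi_psd _. Qed.

Lemma Vxi_ellv_e12 l1 l2 (a : 'I_2) :
  ((ellv l1 l2)^T *m V *m e12 R a) 0 0 = (v + Q *m lam l1 l2) a 0.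
Proof.
rewrite Vxi_bilinE !big_ord_recr big_ord0 /= !mxE /=.
rewrite !big_ord_recr !big_ord0 /= !mxE /= !cE /=.
case: a => [[|[|]] a_lt2] //=; rewrite /e12 /= /e1 /e2 !mxE /= /bump /=;
  by rewrite (@cn_sym 1 0) // (@cn_sym 2 0) // (@cn_sym 2 1) //; ring.
Qed.

Lemma Vxi_e12 (a b : 'I_2) : ((e12 R a)^T *m V *m e12 R b) 0 0 = Q a b.
Proof.
rewrite Vxi_bilinE !big_ord_recr !big_ord0 /= !mxE /= ?cE /=.
case: a => [[|[|]] a_lt2] //=; case: b => [[|[|]] b_lt2] //=;
  by rewrite /e12 /= /e1 /e2 !mxE /= ?cE /bump /=; ring.
Qed.

Lemma Ctau_centering l1 l2 (x : 'cV[R]_t) : in_calT x ->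
  Ctau Sigma p l1 l2 x =
    (t.-1%:R^-1 * lVl Sigma p l1 l2) *: P
    - ((lVl Sigma p l1 l2 - qstar Sigma p) / (t.-1%:R * (x^T *m x) 0 0))
        *: (x *m x^T).
Proof.
case=> x_orth x_neq0; set nx := (x^T *m x) 0 0.
have nx_neq0 : nx != 0 by rewrite cV_norm2_eq0.
set g := v + Q *m lam l1 l2; set g' := t.-1%:R^-1 *: g.
rewrite /Ctau /Ixi /=.
have FE : \matrix_(a < 2) (Cuw Sigma p (ellv l1 l2) (e12 R a) *m x)^T = g' *m x^T.
  apply/matrixP => a j; rewrite [LHS]mxE Cuw_centering -scalemxAl.
  rewrite centering_ones_orth // Vxi_ellv_e12 -/g !mxE big_ord1 !mxE.
  by rewrite [_ / _]mulrC.
have GE : \matrix_(a < 2, b < 2)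
            (x^T *m Cuw Sigma p (e12 R a) (e12 R b) *m x) 0 0
          = (nx / t.-1%:R) *: Q.
  apply/matrixP => a b; rewrite [LHS]mxE Cuw_centering -scalemxAr -scalemxAl.
  rewrite -(mulmxA x^T P x) centering_ones_orth // Vxi_e12.
  by rewrite [LHS]mxE [RHS]mxE -/nx; ring.
set sc := (nx / t.-1%:R)^-1.
have quadE (M : 'M[R]_2) : (g' *m x^T)^T *m (sc *: M) *m (g' *m x^T)
    = (sc * (t.-1%:R^-1 * t.-1%:R^-1 * (g^T *m M *m g) 0 0)) *: (x *m x^T).
  rewrite trmx_mul trmxK -!mulmxA (mulmxA g'^T) (mulmxA (g'^T *m _)).
  rewrite [g'^T *m _ *m g']mx11_scalar mul_scalar_mx -scalemxAr.
  congr (_ *: _); rewrite /g' [(_ *: g)^T]linearZ /= -!scalemxAl -!scalemxAr.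
  by rewrite -!scalemxAl !mulmxA !mxE; ring.
rewrite FE GE mpinvZ ?mulf_neq0 ?invr_eq0 // quadE -lVl_sub_qstar.
rewrite Cuw_centering -/(lVl Sigma p l1 l2) mulrC; congr (_ - _ *: _).
by rewrite /sc; field; rewrite nx_neq0 t1_neq0.
Qed.

Lemma char_poly_Ctau l1 l2 (x : 'cV[R]_t) : in_calT x ->
  char_poly (Ctau Sigma p l1 l2 x) =
    'X * ('X - ((t.-1)%:R^-1 * qstar Sigma p)%:P)
       * ('X - ((t.-1)%:R^-1 * lVl Sigma p l1 l2)%:P) ^+ (t - 2).
Proof.
move=> x_T; have [x_orth x_neq0] := x_T; set nx := (x^T *m x) 0 0.
have nx_neq0 : nx != 0 by rewrite cV_norm2_eq0.
set a := t.-1%:R^-1 * lVl Sigma p l1 l2.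
set b := (lVl Sigma p l1 l2 - qstar Sigma p) / (t.-1%:R * nx).
have -> : t.-1%:R^-1 * qstar Sigma p = a - b * nx.
  by rewrite /a /b; field; rewrite nx_neq0 t1_neq0.
have t_neq0 : t%:R != 0 :> R by rewrite pnatr_eq0 -lt0n ltnW.
apply: (char_poly_rank2_update (s := t%:R) (o := ones R t) (x := x)) => //.
- apply/matrixP => i j; rewrite !ord1 !mxE eqxx mulr1n.
  by rewrite (eq_bigr (fun=> 1)) ?sumr_const ?card_ord // => l _; rewrite !mxE mulr1.
- exact: mx11_scalar.
- rewrite Ctau_centering // -/a -/nx -/b /centering scalerBr scale_scalar_mx mulr1.
  rewrite scalerA; congr (_ - _ *: _ - _).
  by apply/matrixP => i j; rewrite !mxE big_ord1 !mxE mulr1.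
Qed.
End Design.

Theorem proposition2 (R : realFieldType) (k t : nat) (hk : (2 <= k)%N) (ht : (2 <= t)%N)
  (Sigma : 'M[R]_k) (hS : pos_def Sigma)
  (p : {ffun seqT k t -> R}) (hp : is_measure p) (hps : pseudo_symmetric Sigma p)
  (l1 l2 : R) :
  (forall tau : 'cV[R]_t, in_calT tau ->
     char_poly (Ctau Sigma p l1 l2 tau) =
       'X * ('X - ((t.-1)%:R^-1 * qstar Sigma p)%:P)
          * ('X - ((t.-1)%:R^-1 * lVl Sigma p l1 l2)%:P) ^+ (t - 2))
  /\ qstar Sigma p <= lVl Sigma p l1 l2.
Proof.
have k_gt0 : (0 < k)%N := ltnW hk.
split; first exact: char_poly_Ctau.
exact: qstar_le_lVl.
Qed.
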